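(* Let $D=[0,x_0]\times[0,y_0]$, let $\varphi:D\to\mathbb{R}$ be a smooth solution of $\varphi_{xy}=\sin\varphi$, and let $\mathcal{U}(x,y,\lambda)$ be its extended normalized frame, i.e. the solution of $$\partial_x\mathcal{U}=\mathcal{U}\,\frac{i}{2}\begin{pmatrix}\varphi_x&-\lambda\\-\lambda&-\varphi_x\end{pmatrix},\qquad \partial_y\mathcal{U}=\mathcal{U}\,\frac{i}{2}\lambda^{-1}\begin{pmatrix}0&e^{-i\varphi}\\ e^{i\varphi}&0\end{pmatrix},\qquad \mathcal{U}(0,0,\lambda)=I.$$ Let $\theta:D\to\mathbb{R}$ be smooth, let $\mathcal{R}(x,y)=\exp\!\big(\tfrac{i}{2}\theta(x,y)\sigma_3\big)$ be the ($\lambda$-independent) $\mathrm{SU}(2)$-matrix of the rotation by angle $\theta(x,y)$ about $e_3$, let $\mathcal{R}_0:=\mathcal{R}(0,0)$, and define the gauged frame $\hat{\mathcal{U}}:=\mathcal{R}_0^{-1}\,\mathcal{U}\,\mathcal{R}$. Suppose that at a point $(x,y)$ of an open set $\Omega\subset D$, both $\mathcal{U}$ and $\hat{\mathcal{U}}$ admit Birkhoff factorizations $$\mathcal{U}=\mathcal{U}_+V_-=\mathcal{U}_-V_+,\qquad \hat{\mathcal{U}}=\hat{\mathcal{U}}_+\hat V_-=\hat{\mathcal{U}}_-\hat V_+,$$ with $\mathcal{U}_+,\hat{\mathcal{U}}_+\in\Lambda^+_*\mathrm{SU}(2)$, $V_-,\hat V_-\in\Lambda^-\mathrm{SU}(2)$,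 $\mathcal{U}_-,\hat{\mathcal{U}}_-\in\Lambda^-_*\mathrm{SU}(2)$, $V_+,\hat V_+\in\Lambda^+\mathrm{SU}(2)$, for all $(x,y)\in\Omega$. Define the potentials on $\Omega$ by $$\eta^x:=-\lambda^{-1}\,\mathcal{U}_+^{-1}\partial_x\mathcal{U}_+,\quad \eta^y:=-\lambda\,\mathcal{U}_-^{-1}\partial_y\mathcal{U}_-,\quad \hat\eta^x:=-\lambda^{-1}\,\hat{\mathcal{U}}_+^{-1}\partial_x\hat{\mathcal{U}}_+,\quad \hat\eta^y:=-\lambda\,\hat{\mathcal{U}}_-^{-1}\partial_y\hat{\mathcal{U}}_-.$$ Then on $\Omega$ $$\hat\eta^x=\mathcal{R}_0^{-1}\,\eta^x\,\mathcal{R}_0,\qquad \hat\eta^y=\mathcal{R}_0^{-1}\,\eta^y\,\mathcal{R}_0.$$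
   Context: $I$ is the $2\times2$ identity and $\sigma_3=\mathrm{diag}(1,-1)$. The frame $\mathcal{U}(x,y,\lambda)$ is defined for $\lambda\in\mathbb{C}\setminus\{0\}$, is holomorphic in $\lambda$, is $\mathrm{SU}(2)$-valued for real $\lambda\neq 0$, and satisfies $\sigma_3\mathcal{U}(x,y,\lambda)\sigma_3=\mathcal{U}(x,y,-\lambda)$. Twisted loops: a loop is a map $g(\lambda)=\sum_{k\in\mathbb{Z}}g_k\lambda^k$ (Laurent series with $2\times2$ complex matrix coefficients converging on $\mathbb{C}\setminus\{0\}$) with $g(\lambda)\in\mathrm{SU}(2)$ for real $\lambda\ne0$ and $\sigma_3g(\lambda)\sigma_3=g(-\lambda)$. $\Lambda^+\mathrm{SU}(2)$: loops with $g_k=0$ for $k<0$; $\Lambda^+_*\mathrm{SU}(2)$: those in $\Lambda^+\mathrm{SU}(2)$ with $g_0=I$. $\Lambda^-\mathrm{SU}(2)$: loops with $g_k=0$ for $k>0$; $\Lambda^-_*\mathrm{SU}(2)$: those in $\Lambda^-\mathrm{SU}(2)$ with $g_0=I$. All factors are regarded as smooth functions of $(x,y)\in\Omega$ (and $\lambda$). *)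

From Stdlib Require Import Reals ZArith List.
From Coquelicot Require Import Coquelicot.

Open Scope R_scope.

Definition cexpi (t : R) : C := (cos t, sin t).

Definition Czpow (l : C) (k : Z) : C :=
  match k with
  | Z0 => RtoC 1
  | Zpos p => Cpow l (Pos.to_nat p)
  | Zneg p => Cinv (Cpow l (Pos.to_nat p))
  end.

Record M2 := mkM2 { m11 : C; m12 : C; m21 : C; m22 : C }.

Definition ent (m : M2) (i j : bool) : C :=
  match i, j with
  | false, false => m11 m | false, true => m12 m
  | true, false => m21 m | true, true => m22 m
  end.

Definition M2id : M2 := mkM2 (RtoC 1) (RtoC 0) (RtoC 0) (RtoC 1).
Definition M2zero : M2 := mkM2 (RtoC 0) (RtoC 0) (RtoC 0) (RtoC 0).
Definition sigma3 : M2 := mkM2 (RtoC 1) (RtoC 0) (RtoC 0) (Copp (RtoC 1)).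

Definition M2mul (a b : M2) : M2 :=
  mkM2 (Cplus (Cmult (m11 a) (m11 b)) (Cmult (m12 a) (m21 b)))
       (Cplus (Cmult (m11 a) (m12 b)) (Cmult (m12 a) (m22 b)))
       (Cplus (Cmult (m21 a) (m11 b)) (Cmult (m22 a) (m21 b)))
       (Cplus (Cmult (m21 a) (m12 b)) (Cmult (m22 a) (m22 b))).

Definition M2scal (c : C) (a : M2) : M2 :=
  mkM2 (Cmult c (m11 a)) (Cmult c (m12 a)) (Cmult c (m21 a)) (Cmult c (m22 a)).

Definition M2det (a : M2) : C :=
  Cminus (Cmult (m11 a) (m22 a)) (Cmult (m12 a) (m21 a)).

Definition M2inv (a : M2) : M2 :=
  M2scal (Cinv (M2det a)) (mkM2 (m22 a) (Copp (m12 a)) (Copp (m21 a)) (m11 a)).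

Definition M2adj (a : M2) : M2 :=
  mkM2 (Cconj (m11 a)) (Cconj (m21 a)) (Cconj (m12 a)) (Cconj (m22 a)).

Definition is_SU2 (a : M2) : Prop := M2mul (M2adj a) a = M2id /\ M2det a = RtoC 1.

(** ** Rotation about e_3: exp((i/2) t sigma_3), written out as a diagonal matrix *)
Definition Rot (t : R) : M2 :=
  mkM2 (cexpi (t / 2)) (RtoC 0) (RtoC 0) (cexpi (- (t / 2))).

(* a : Z -> M2 are the Laurent coefficients of g on C\{0}: for every lambda <> 0 and
   every entry, both halves of the Laurent series converge and sum to g(lambda). *)
Definition laurent_coeffs (a : Z -> M2) (g : C -> M2) : Prop :=
  forall l : C, l <> RtoC 0 -> forall i j : bool,
    exists Pp Pn : C,
      @is_series C_AbsRing C_NormedModule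
        (fun n : nat => Cmult (ent (a (Z.of_nat n)) i j) (Czpow l (Z.of_nat n))) Pp /\
      @is_series C_AbsRing C_NormedModule
        (fun n : nat => Cmult (ent (a (- Z.of_nat (S n))%Z) i j) (Czpow l (- Z.of_nat (S n))%Z)) Pn /\
      ent (g l) i j = Cplus Pp Pn.

Definition SU2_on_reals (g : C -> M2) : Prop :=
  forall r : R, r <> 0 -> is_SU2 (g (RtoC r)).

Definition twisted (g : C -> M2) : Prop :=
  forall l : C, l <> RtoC 0 -> M2mul (M2mul sigma3 (g l)) sigma3 = g (Copp l).

Definition loop_with (P : (Z -> M2) -> Prop) (g : C -> M2) : Prop :=
  exists a : Z -> M2, laurent_coeffs a g /\ P a /\ SU2_on_reals g /\ twisted g.

Definition LplusSU2 (g : C -> M2) : Prop :=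
  loop_with (fun a => forall k, (k < 0)%Z -> a k = M2zero) g.
Definition LplusStarSU2 (g : C -> M2) : Prop :=
  loop_with (fun a => (forall k, (k < 0)%Z -> a k = M2zero) /\ a 0%Z = M2id) g.
Definition LminusSU2 (g : C -> M2) : Prop :=
  loop_with (fun a => forall k, (0 < k)%Z -> a k = M2zero) g.
Definition LminusStarSU2 (g : C -> M2) : Prop :=
  loop_with (fun a => (forall k, (0 < k)%Z -> a k = M2zero) /\ a 0%Z = M2id) g.

Definition open2 (O : R -> R -> Prop) : Prop :=
  forall x y, O x y -> exists e : R, 0 < e /\
    forall x' y', Rabs (x' - x) < e -> Rabs (y' - y) < e -> O x' y'.

Inductive dir := DX | DY.

(* C^infinity on an open set O: all iterated partial derivatives exist on O and are
   (jointly) continuous there; F w is the iterated partial derivative along the word w. *)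
Definition smooth_on (O : R -> R -> Prop) (f : R -> R -> R) : Prop :=
  exists F : list dir -> R -> R -> R, F nil = f /\
    forall (w : list dir) x y, O x y ->
      is_derive (fun t => F w t y) x (F (DX :: w) x y) /\
      is_derive (fun t => F w x t) y (F (DY :: w) x y) /\
      continuous (fun p : R * R => F w (fst p) (snd p)) (x, y).

Definition inD (x0 y0 x y : R) : Prop := 0 <= x <= x0 /\ 0 <= y <= y0.

Definition smooth_on_D (x0 y0 : R) (f : R -> R -> R) : Prop :=
  exists O, open2 O /\ (forall x y, inD x0 y0 x y -> O x y) /\ smooth_on O f.

Definition M2smooth_on (O : R -> R -> Prop) (f : R -> R -> M2) : Prop :=
  forall i j : bool,
    smooth_on O (fun x y => fst (ent (f x y) i j)) /\
    smooth_on O (fun x y => snd (ent (f x y) i j)).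

(* partial derivatives (total operators, the true derivative when it exists) *)
Definition pdx (f : R -> R -> R) (x y : R) : R := Derive (fun t => f t y) x.
Definition pdy (f : R -> R -> R) (x y : R) : R := Derive (fun t => f x t) y.

Definition M2pdx (f : R -> R -> M2) (x y : R) : M2 :=
  let d i j : C := (pdx (fun s t => fst (ent (f s t) i j)) x y,
                    pdx (fun s t => snd (ent (f s t) i j)) x y) in
  mkM2 (d false false) (d false true) (d true false) (d true true).
Definition M2pdy (f : R -> R -> M2) (x y : R) : M2 :=
  let d i j : C := (pdy (fun s t => fst (ent (f s t) i j)) x y,
                    pdy (fun s t => snd (ent (f s t) i j)) x y) in
  mkM2 (d false false) (d false true) (d true false) (d true true).

Definition has_M2pdx (f : R -> R -> M2) (x y : R) (l : M2) : Prop :=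
  forall i j : bool,
    is_derive (fun t => fst (ent (f t y) i j)) x (fst (ent l i j)) /\
    is_derive (fun t => snd (ent (f t y) i j)) x (snd (ent l i j)).
Definition has_M2pdy (f : R -> R -> M2) (x y : R) (l : M2) : Prop :=
  forall i j : bool,
    is_derive (fun t => fst (ent (f x t) i j)) y (fst (ent l i j)) /\
    is_derive (fun t => snd (ent (f x t) i j)) y (snd (ent l i j)).

Definition frameA (phi : R -> R -> R) (x y : R) (l : C) : M2 :=
  M2scal (Cmult Ci (RtoC (1/2)))
    (mkM2 (RtoC (pdx phi x y)) (Copp l) (Copp l) (RtoC (- pdx phi x y))).
Definition frameB (phi : R -> R -> R) (x y : R) (l : C) : M2 :=
  M2scal (Cmult (Cmult Ci (RtoC (1/2))) (Cinv l))
    (mkM2 (RtoC 0) (cexpi (- phi x y)) (cexpi (phi x y)) (RtoC 0)).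

Definition is_frame (x0 y0 : R) (phi : R -> R -> R) (U : R -> R -> C -> M2) : Prop :=
  forall l : C, l <> RtoC 0 ->
    U 0 0 l = M2id /\
    forall x y, inD x0 y0 x y ->
      has_M2pdx (fun s t => U s t l) x y (M2mul (U x y l) (frameA phi x y l)) /\
      has_M2pdy (fun s t => U s t l) x y (M2mul (U x y l) (frameB phi x y l)).

Definition eta_x (Up : R -> R -> C -> M2) (x y : R) (l : C) : M2 :=
  M2scal (Copp (Cinv l)) (M2mul (M2inv (Up x y l)) (M2pdx (fun s t => Up s t l) x y)).
Definition eta_y (Um : R -> R -> C -> M2) (x y : R) (l : C) : M2 :=
  M2scal (Copp l) (M2mul (M2inv (Um x y l)) (M2pdy (fun s t => Um s t l) x y)).

(* Since R0 does not depend on (x, y), the gauged frame factors as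
     R0^-1 U R = (R0^-1 U+ R0) (R0^-1 V- R),
   where the first factor again lies in Lambda^+_* SU(2) and the second is, like V-, a
   power series in 1/lambda.  Birkhoff factorizations are unique: if U+ V- = A+ B-, then
   A+^-1 U+ = B- V-^-1 is a power series both in lambda and in 1/lambda, hence constant
   by Liouville's theorem, and equal to I by the normalization at lambda = 0.  Hence
   hat U+ = R0^-1 U+ R0 on Omega, and differentiating in x gives
   hat eta^x = R0^-1 eta^x R0; the same argument after lambda |-> 1/lambda gives eta^y.

   Liouville's theorem is proved for power series by a discrete Cauchy estimate
   (averaging over roots of unity).  Loops in Lambda^+- SU(2) are invertible for every
   lambda <> 0 because their determinant is an entire function equal to 1 on the real
   axis. *)

From Stdlib Require Import Reals ZArith List Lra Lia.
From Coquelicot Require Import Coquelicot.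
Open Scope R_scope.

Lemma C_eq (z w : C) : fst z = fst w -> snd z = snd w -> z = w.
Proof. destruct z, w; simpl; intros -> ->; reflexivity. Qed.

Lemma Cinv_neq_0 (z : C) : z <> 0 -> (/ z)%C <> 0.
Proof. intros Hz E. apply Hz. rewrite <- (Cmult_1_l z), <- (Cinv_l z), E by exact Hz. ring. Qed.

Lemma Cinv_inv (z : C) : z <> 0 -> (/ / z)%C = z.
Proof. intros Hz. field. exact Hz. Qed.

Lemma RtoC_neq_0 (r : R) : r <> 0 -> RtoC r <> 0.
Proof. intros H E; apply H; exact (f_equal fst E). Qed.

Lemma Cmod_le_fst_snd (z : C) : Cmod z <= Rabs (fst z) + Rabs (snd z).
Proof.
  destruct z as [a b]; unfold Cmod; simpl.
  pose proof (Rabs_pos a); pose proof (Rabs_pos b).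
  rewrite <- (sqrt_Rsqr (Rabs a + Rabs b)) by lra.
  apply sqrt_le_1_alt. unfold Rsqr. simpl. rewrite !Rmult_1_r.
  rewrite <- (Rabs_pos_eq (a * a)), <- (Rabs_pos_eq (b * b)), !Rabs_mult by nra.
  nra.
Qed.

(** * Complex series *)

(** Complex series are handled through their real and imaginary parts, so that
    Coquelicot's theory of real series (uniqueness, Cauchy products) applies. *)
Definition is_Cseries (u : nat -> C) (s : C) : Prop :=
  is_series (fun n => fst (u n)) (fst s) /\ is_series (fun n => snd (u n)) (snd s).

Lemma is_Cseries_ext u v s : (forall n, u n = v n) -> is_Cseries u s -> is_Cseries v s.
Proof.
  intros E [H1 H2]; split.
  - apply (is_series_ext _ _ _ (fun n => f_equal fst (E n)) H1).
  - apply (is_series_ext _ _ _ (fun n => f_equal snd (E n)) H2).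
Qed.

Lemma is_Cseries_unique u s t : is_Cseries u s -> is_Cseries u t -> s = t.
Proof.
  intros [H1 H2] [H3 H4].
  apply is_series_unique in H1, H2, H3, H4.
  apply C_eq; congruence.
Qed.

Lemma is_series_zero : is_series (fun _ : nat => 0) 0.
Proof.
  apply (filterlim_ext (fun _ => zero)); [|apply filterlim_const].
  intros n; rewrite sum_n_Reals, sum_eq_R0; reflexivity.
Qed.

Lemma is_Cseries_0 : is_Cseries (fun _ => RtoC 0) (RtoC 0).
Proof. split; apply is_series_zero. Qed.

Lemma is_Cseries_shift u s :
  is_Cseries (fun n => u (S n)) s -> is_Cseries u (u 0%nat + s)%C.
Proof.
  intros [H1 H2]; split; apply is_series_decr_1; simpl;
  [replace (plus _ _) with (fst s) | replace (plus _ _) with (snd s)];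
  auto; unfold plus, opp; simpl; ring.
Qed.

Lemma is_Cseries_delta (k : nat) (v : C) :
  is_Cseries (fun n => if Nat.eqb n k then v else RtoC 0) v.
Proof.
  revert v; induction k as [|k IH]; intros v.
  - pose proof (is_Cseries_shift (fun n => if Nat.eqb n 0 then v else RtoC 0) _ is_Cseries_0) as H.
    simpl in H; rewrite Cplus_0_r in H; exact H.
  - pose proof (is_Cseries_shift (fun n => if Nat.eqb n (S k) then v else RtoC 0) _ (IH v)) as H.
    simpl in H; rewrite Cplus_0_l in H; exact H.
Qed.

Lemma is_Cseries_plus u v s t :
  is_Cseries u s -> is_Cseries v t -> is_Cseries (fun n => u n + v n)%C (s + t)%C.
Proof.
  intros [H1 H2] [H3 H4]; split;
  [exact (is_series_plus _ _ _ _ H1 H3) | exact (is_series_plus _ _ _ _ H2 H4)].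
Qed.

Lemma is_Cseries_scal c u s :
  is_Cseries u s -> is_Cseries (fun n => c * u n)%C (c * s)%C.
Proof.
  intros [H1 H2]; destruct c as [c1 c2]; split; simpl.
  - exact (is_series_minus _ _ _ _ (is_series_scal c1 _ _ H1) (is_series_scal c2 _ _ H2)).
  - exact (is_series_plus _ _ _ _ (is_series_scal c1 _ _ H2) (is_series_scal c2 _ _ H1)).
Qed.

Lemma sum_n_C (u : nat -> C_NormedModule) n :
  fst (sum_n u n) = @sum_n R_AbelianMonoid (fun k => fst (u k)) n /\
  snd (sum_n u n) = @sum_n R_AbelianMonoid (fun k => snd (u k)) n.
Proof.
  induction n as [|n [IH1 IH2]]; [rewrite !sum_O; auto|].
  rewrite !sum_Sn, <- IH1, <- IH2; auto.
Qed.

Lemma is_Cseries_of_is_series u s :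
  @is_series C_AbsRing C_NormedModule u s -> is_Cseries u s.
Proof.
  unfold is_series; intros Hlim.
  pose proof (proj1 (filterlim_locally (F := eventually) (sum_n u) s) Hlim) as H.
  (* The two sides of [sum_n_C] live in different, convertible, canonical
     structures: [rewrite] cannot see through them, [eq_ind] can. *)
  split; apply (proj2 (filterlim_locally (F := eventually) _ _)); intros eps;
  eapply filter_imp; try exact (H eps); intros n [Hfst Hsnd].
  - exact (eq_ind _ (fun z : R => ball (fst s) eps z) Hfst _ (proj1 (sum_n_C u n))).
  - exact (eq_ind _ (fun z : R => ball (snd s) eps z) Hsnd _ (proj2 (sum_n_C u n))).
Qed.

Lemma ex_series_Rabs_le (a b : nat -> R) :
  (forall n, Rabs (a n) <= b n) -> ex_series b -> ex_series a.
Proof. apply (ex_series_le (K := R_AbsRing) (V := R_CompleteNormedModule)). Qed.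

Lemma Rabs_fst_le_Cmod (z : C) : Rabs (fst z) <= Cmod z.
Proof. eapply Rle_trans; [apply Rmax_l | apply Rmax_Cmod]. Qed.

Lemma Rabs_snd_le_Cmod (z : C) : Rabs (snd z) <= Cmod z.
Proof. eapply Rle_trans; [apply Rmax_r | apply Rmax_Cmod]. Qed.

Lemma ex_series_Rabs_parts (u : nat -> C) :
  ex_series (fun n => Cmod (u n)) ->
  ex_series (fun n => Rabs (fst (u n))) /\ ex_series (fun n => Rabs (snd (u n))).
Proof.
  intros H; split; apply (ex_series_Rabs_le _ (fun n => Cmod (u n))); auto;
  intros n; rewrite Rabs_Rabsolu; [apply Rabs_fst_le_Cmod | apply Rabs_snd_le_Cmod].
Qed.

Lemma is_Cseries_Cmod_le u s (c : nat -> R) :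
  is_Cseries u s -> (forall n, Cmod (u n) <= c n) -> ex_series c ->
  Cmod s <= 2 * Series c.
Proof.
  intros [H1 H2] Hc Ec.
  assert (Hpart : forall p : C -> R, (forall z, Rabs (p z) <= Cmod z) ->
            forall l, is_series (fun n => p (u n)) l -> Rabs l <= Series c).
  { intros p Hp l Hl. rewrite <- (is_series_unique _ _ Hl).
    assert (Hle : forall n, 0 <= Rabs (p (u n)) <= c n).
    { intros n; split; [apply Rabs_pos | eapply Rle_trans; [apply Hp | apply Hc]]. }
    eapply Rle_trans; [apply Series_Rabs | apply Series_le; auto].
    apply (ex_series_Rabs_le _ c); auto.
    intros n; rewrite Rabs_Rabsolu; apply Hle. }
  pose proof (Hpart fst Rabs_fst_le_Cmod _ H1).
  pose proof (Hpart snd Rabs_snd_le_Cmod _ H2).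
  pose proof (Cmod_le_fst_snd s). lra.
Qed.

Fixpoint Csum (f : nat -> C) (N : nat) : C :=
  match N with O => RtoC 0 | S n => (Csum f n + f n)%C end.

Lemma Csum_ext f g N : (forall j, (j < N)%nat -> f j = g j) -> Csum f N = Csum g N.
Proof.
  induction N as [|N IH]; intros H; simpl; [reflexivity|].
  rewrite IH, H; auto; intros; apply H; lia.
Qed.

Lemma Csum_scal c f N : Csum (fun j => c * f j)%C N = (c * Csum f N)%C.
Proof. induction N as [|N IH]; simpl; [|rewrite IH]; ring. Qed.

Lemma Csum_Cmod_le f N (M : R) : (forall j, Cmod (f j) <= M) -> Cmod (Csum f N) <= INR N * M.
Proof.
  intros H; induction N as [|N IH]; simpl Csum; [rewrite Cmod_0; simpl; lra|].
  eapply Rle_trans; [apply Cmod_triangle|]. rewrite S_INR. specialize (H N). lra.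
Qed.

Lemma Csum_parts f n :
  fst (Csum f (S n)) = sum_f_R0 (fun k => fst (f k)) n /\
  snd (Csum f (S n)) = sum_f_R0 (fun k => snd (f k)) n.
Proof.
  induction n as [|n [IH1 IH2]]; simpl in *; [split; ring|].
  rewrite IH1, IH2; auto.
Qed.

Lemma is_Cseries_Csum (u : nat -> nat -> C) (s : nat -> C) N :
  (forall j, is_Cseries (u j) (s j)) ->
  is_Cseries (fun n => Csum (fun j => u j n) N) (Csum s N).
Proof.
  intros H; induction N as [|N IH]; simpl; [apply is_Cseries_0 | apply is_Cseries_plus; auto].
Qed.

Lemma is_Cseries_mult u v s t :
  is_Cseries u s -> is_Cseries v t ->
  ex_series (fun n => Cmod (u n)) -> ex_series (fun n => Cmod (v n)) ->
  is_Cseries (fun n => Csum (fun k => u k * v (n - k)%nat) (S n))%C (s * t)%C.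
Proof.
  intros [Hu1 Hu2] [Hv1 Hv2] Au Av.
  destruct (ex_series_Rabs_parts u Au) as [Au1 Au2].
  destruct (ex_series_Rabs_parts v Av) as [Av1 Av2].
  split.
  - eapply is_series_ext;
      [| exact (is_series_minus _ _ _ _ (is_series_mult _ _ _ _ Hu1 Hv1 Au1 Av1)
                                        (is_series_mult _ _ _ _ Hu2 Hv2 Au2 Av2))].
    intros n; rewrite (proj1 (Csum_parts _ n)).
    change (plus ?a (opp ?b)) with (a - b); rewrite <- minus_sum.
    apply sum_eq; reflexivity.
  - eapply is_series_ext;
      [| exact (is_series_plus _ _ _ _ (is_series_mult _ _ _ _ Hu1 Hv2 Au1 Av2)
                                       (is_series_mult _ _ _ _ Hu2 Hv1 Au2 Av1))].
    intros n; rewrite (proj2 (Csum_parts _ n)).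
    change (plus ?a ?b) with (a + b); rewrite <- plus_sum.
    apply sum_eq; reflexivity.
Qed.

(** * Power series on the punctured plane *)

Implicit Types (a b : nat -> C) (f g : C -> C) (l c d : C).

Definition has_pseries (a : nat -> C) (f : C -> C) : Prop :=
  forall l : C, l <> 0 -> is_Cseries (fun n => a n * l ^ n)%C (f l).

(** [entire f c]: on [C \ {0}], [f] agrees with an everywhere convergent power
    series with constant term [c]; only the values of [f] off [0] matter. *)
Definition entire (f : C -> C) (c : C) : Prop :=
  exists a, has_pseries a f /\ a 0%nat = c.

Lemma has_pseries_real_parts a f (r : R) : has_pseries a f -> r <> 0 ->
  is_series (fun n => fst (a n) * r ^ n) (fst (f r)) /\
  is_series (fun n => snd (a n) * r ^ n) (snd (f r)).
Proof.
  intros H Hr. destruct (H r (RtoC_neq_0 r Hr)) as [H1 H2].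
  split; [refine (is_series_ext _ _ _ _ H1) | refine (is_series_ext _ _ _ _ H2)];
  intros n; rewrite <- RtoC_pow; simpl; ring.
Qed.

Lemma CV_radius_infinite (b : nat -> R) :
  (forall r, 0 < r -> ex_series (fun n => b n * r ^ n)) ->
  forall x, Rbar_lt (Rabs x) (CV_radius b).
Proof.
  intros H x. apply Rbar_not_le_lt; intros Hle.
  assert (Hx : 0 < Rabs x + 1) by (pose proof (Rabs_pos x); lra).
  apply (CV_disk_outside b (Rabs x + 1)).
  - rewrite (Rabs_pos_eq (Rabs x + 1)) by lra.
    eapply Rbar_le_lt_trans; [exact Hle | simpl; lra].
  - apply ex_series_lim_0, H, Hx.
Qed.

Lemma has_pseries_abs a f : has_pseries a f ->
  forall rho, 0 <= rho -> ex_series (fun n => Cmod (a n) * rho ^ n).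
Proof.
  intros H rho Hrho.
  assert (Hinf : forall p : C -> R, (forall r, 0 < r -> ex_series (fun n => p (a n) * r ^ n)) ->
            ex_series (fun n => Rabs (p (a n) * rho ^ n))).
  { intros p Hp. apply CV_disk_inside, CV_radius_infinite, Hp. }
  assert (Ex := ex_series_plus _ _
    (Hinf fst (fun r Hr => ex_intro _ _ (proj1 (has_pseries_real_parts a f r H ltac:(lra)))))
    (Hinf snd (fun r Hr => ex_intro _ _ (proj2 (has_pseries_real_parts a f r H ltac:(lra)))))).
  refine (ex_series_Rabs_le _ _ _ Ex); intros n.
  pose proof (pow_le rho n Hrho). pose proof (Cmod_le_fst_snd (a n)).
  unfold plus; simpl.
  rewrite Rabs_pos_eq by (apply Rmult_le_pos; [apply Cmod_ge_0 | auto]).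
  rewrite !Rabs_mult, (Rabs_pos_eq (rho ^ n)) by auto.
  nra.
Qed.

Lemma has_pseries_Cmod_le a f l (rho : R) : has_pseries a f -> l <> 0 -> Cmod l <= rho ->
  Cmod (f l) <= 2 * Series (fun n => Cmod (a n) * rho ^ n).
Proof.
  intros H Hl Hrho.
  assert (Hrho0 : 0 <= rho) by (eapply Rle_trans; [apply Cmod_ge_0 | exact Hrho]).
  apply (is_Cseries_Cmod_le _ _ _ (H l Hl)); [|exact (has_pseries_abs a f H rho Hrho0)].
  intros n. rewrite Cmod_mult, Cmod_pow.
  apply Rmult_le_compat_l; [apply Cmod_ge_0|].
  apply pow_incr; split; [apply Cmod_ge_0 | exact Hrho].
Qed.

Lemma has_pseries_constant a f l : has_pseries a f -> (forall n, a (S n) = 0) -> l <> 0 ->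
  f l = a 0%nat.
Proof.
  intros H Ha Hl. apply (is_Cseries_unique _ _ _ (H l Hl)).
  refine (is_Cseries_ext _ _ _ _ (is_Cseries_delta 0 (a 0%nat))).
  intros [|n]; simpl; [ring | rewrite Ha; ring].
Qed.

Lemma entire_ext f g c : entire f c -> (forall l, l <> 0 -> f l = g l) -> entire g c.
Proof.
  intros [a [Ha Ha0]] E. exists a; split; auto.
  intros l Hl; rewrite <- E by exact Hl; auto.
Qed.

Lemma entire_const c : entire (fun _ => c) c.
Proof.
  exists (fun n => if Nat.eqb n 0 then c else RtoC 0); split; auto.
  intros l Hl. refine (is_Cseries_ext _ _ _ _ (is_Cseries_delta 0 c)).
  intros [|n]; simpl; ring.
Qed.

Lemma entire_plus f g c d : entire f c -> entire g d -> entire (fun l => f l + g l)%C (c + d)%C.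
Proof.
  intros [a [Ha <-]] [b [Hb <-]].
  exists (fun n => a n + b n)%C; split; auto.
  intros l Hl. refine (is_Cseries_ext _ _ _ _ (is_Cseries_plus _ _ _ _ (Ha l Hl) (Hb l Hl))).
  intros n; ring.
Qed.

Lemma entire_scal k f c : entire f c -> entire (fun l => k * f l)%C (k * c)%C.
Proof.
  intros [a [Ha <-]]. exists (fun n => k * a n)%C; split; auto.
  intros l Hl. refine (is_Cseries_ext _ _ _ _ (is_Cseries_scal k _ _ (Ha l Hl))).
  intros n; ring.
Qed.

Lemma entire_opp f c : entire f c -> entire (fun l => - f l)%C (- c)%C.
Proof.
  intros Hf. replace (- c)%C with (RtoC (-1) * c)%C by ring.
  refine (entire_ext _ _ _ (entire_scal (-1) _ _ Hf) _). intros l _; ring.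
Qed.

Lemma entire_mult f g c d : entire f c -> entire g d -> entire (fun l => f l * g l)%C (c * d)%C.
Proof.
  intros [a [Ha <-]] [b [Hb <-]].
  exists (fun n => Csum (fun k => a k * b (n - k)%nat) (S n))%C; split; [|simpl; ring].
  intros l Hl.
  assert (Habs : forall u h, has_pseries u h -> ex_series (fun n => Cmod (u n * l ^ n)%C)).
  { intros u h Hu. refine (ex_series_ext _ _ _ (has_pseries_abs u h Hu (Cmod l) (Cmod_ge_0 l))).
    intros n; rewrite Cmod_mult, Cmod_pow; reflexivity. }
  refine (is_Cseries_ext _ _ _ _
            (is_Cseries_mult _ _ _ _ (Ha l Hl) (Hb l Hl) (Habs a f Ha) (Habs b g Hb))).
  intros n. rewrite Cmult_comm, <- Csum_scal. apply Csum_ext; intros k Hk.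
  replace n with (k + (n - k))%nat at 3 by lia. rewrite Cpow_add_r. ring.
Qed.

Lemma pseries_zero_on_pos_head (b : nat -> R) :
  (forall r, 0 < r -> is_series (fun n => b n * r ^ n) 0) -> b 0%nat = 0.
Proof.
  intros H.
  assert (Hcont : continuity_pt (PSeries b) 0).
  { apply PSeries_continuity, CV_radius_infinite. intros r Hr; exists 0; auto. }
  apply Rabs_eq_0, Rle_antisym; [|apply Rabs_pos].
  apply le_epsilon; intros eps Heps. rewrite Rplus_0_l.
  destruct (Hcont eps Heps) as [delta [Hdelta Hclose]].
  assert (Hd2 : 0 < delta / 2) by lra.
  specialize (Hclose (delta / 2)). simpl in Hclose; unfold R_dist in Hclose.
  rewrite PSeries_0, (is_pseries_unique _ _ 0) in Hclose by (apply is_pseries_R, H, Hd2).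
  rewrite Rminus_0_l, Rabs_Ropp in Hclose. left; apply Hclose. split.
  - split; [exact I | lra].
  - rewrite Rminus_0_r, Rabs_pos_eq; lra.
Qed.

Lemma pseries_zero_on_pos (b : nat -> R) :
  (forall r, 0 < r -> is_series (fun n => b n * r ^ n) 0) -> forall n, b n = 0.
Proof.
  intros H n; revert b H; induction n as [|n IH]; intros b H.
  - apply pseries_zero_on_pos_head, H.
  - apply (IH (fun k => b (S k))); intros r Hr.
    assert (Hb0 := pseries_zero_on_pos_head b H).
    assert (Hshift : is_series (fun k => b (S k) * r ^ S k) 0).
    { apply (is_series_incr_1 (fun k => b k * r ^ k)).
      rewrite Hb0, Rmult_0_l. change (plus 0 0) with (0 + 0). rewrite Rplus_0_r.
      apply (H r Hr). }
    apply (is_series_scal_l (/ r)) in Hshift.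
    refine (is_series_ext _ _ _ _ _); [|rewrite <- (Rmult_0_r (/ r)); exact Hshift].
    intros k; unfold scal; simpl; unfold mult; simpl. field. lra.
Qed.

Lemma entire_eq_on_pos f c d : entire f c -> (forall r, 0 < r -> f r = d) ->
  forall l, l <> 0 -> f l = d.
Proof.
  intros Hf Hpos l Hl.
  destruct (entire_plus _ _ _ _ Hf (entire_const (- d)%C)) as [b [Hb _]].
  assert (Hzero : forall n, b n = 0).
  { intros n.
    assert (Hparts : forall r, 0 < r ->
              is_series (fun n => fst (b n) * r ^ n) 0 /\ is_series (fun n => snd (b n) * r ^ n) 0).
    { intros r Hr. destruct (has_pseries_real_parts _ _ r Hb ltac:(lra)) as [H1 H2].
      rewrite Hpos in H1, H2 by exact Hr.
      simpl in H1, H2; rewrite Rplus_opp_r in H1, H2. auto. }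
    apply C_eq; simpl.
    - apply (pseries_zero_on_pos (fun n => fst (b n))); intros r Hr; apply Hparts, Hr.
    - apply (pseries_zero_on_pos (fun n => snd (b n))); intros r Hr; apply Hparts, Hr. }
  assert (Hfl : (f l + - d)%C = 0).
  { rewrite (has_pseries_constant _ _ l Hb (fun n => Hzero (S n)) Hl). apply Hzero. }
  replace (f l) with (f l + - d + d)%C by ring. rewrite Hfl. ring.
Qed.

(** * Liouville's theorem for power series *)

Lemma cexpi_add s t : (cexpi s * cexpi t)%C = cexpi (s + t).
Proof. unfold cexpi; apply C_eq; simpl; rewrite ?cos_plus, ?sin_plus; ring. Qed.

Lemma cexpi_pow t m : (cexpi t ^ m)%C = cexpi (INR m * t).
Proof.
  induction m as [|m IH].
  - unfold cexpi; simpl; rewrite Rmult_0_l, cos_0, sin_0; reflexivity.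
  - rewrite Cpow_S, IH, cexpi_add, S_INR. apply (f_equal cexpi); ring.
Qed.

Lemma Cmod_cexpi t : Cmod (cexpi t) = 1.
Proof.
  unfold Cmod, cexpi; simpl fst; simpl snd.
  rewrite <- sqrt_1; f_equal. rewrite <- (sin2_cos2 t); unfold Rsqr; ring.
Qed.

Definition root_of_unity (N : nat) : C := cexpi (2 * PI / INR N).

Lemma Cmod_root_of_unity_pow N m : Cmod (root_of_unity N ^ m) = 1.
Proof. rewrite Cmod_pow; unfold root_of_unity; rewrite Cmod_cexpi, pow1; reflexivity. Qed.

Lemma root_of_unity_pow_N N : (0 < N)%nat -> (root_of_unity N ^ N)%C = 1.
Proof.
  intros HN. unfold root_of_unity. rewrite cexpi_pow.
  replace (INR N * (2 * PI / INR N)) with (2 * PI) by (field; apply not_0_INR; lia).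
  unfold cexpi; rewrite cos_2PI, sin_2PI; reflexivity.
Qed.

Lemma root_of_unity_pow_eq_1 N m : (0 < N)%nat -> (root_of_unity N ^ m)%C = 1 ->
  Nat.divide N m.
Proof.
  intros HN E. unfold root_of_unity in E; rewrite cexpi_pow in E.
  apply (f_equal fst) in E; simpl in E.
  assert (HNpos : 0 < INR N) by (apply lt_0_INR; lia).
  replace (INR m * (2 * PI / INR N)) with (2 * (PI * INR m / INR N)) in E by (field; lra).
  rewrite cos_2a_sin in E.
  destruct (sin_eq_0_0 (PI * INR m / INR N)) as [z Hz]; [nra|].
  pose proof PI_RGT_0.
  assert (Hm : INR m = IZR z * INR N).
  { apply (Rmult_eq_reg_l (PI / INR N)); [|apply Rgt_not_eq, Rdiv_lt_0_compat; lra].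
    replace (PI / INR N * INR m) with (PI * INR m / INR N) by (field; lra).
    rewrite Hz; field; lra. }
  assert (Hz0 : (0 <= z)%Z).
  { apply le_IZR. pose proof (pos_INR m). nra. }
  exists (Z.to_nat z). apply INR_eq.
  rewrite mult_INR, Hm, (INR_IZR_INZ (Z.to_nat z)), Z2Nat.id; auto.
Qed.

Lemma Csum_geom q N : (Csum (fun j => q ^ j) N * (q - 1))%C = (q ^ N - 1)%C.
Proof.
  induction N as [|N IH]; simpl Csum; [simpl; ring|].
  rewrite Cmult_plus_distr_r, IH, Cpow_S. ring.
Qed.

Lemma sum_root_of_unity N m : (0 < N)%nat -> ~ Nat.divide N m ->
  Csum (fun j => (root_of_unity N ^ m) ^ j)%C N = 0.
Proof.
  intros HN Hm. set (q := (root_of_unity N ^ m)%C).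
  assert (Hq : (q - 1)%C <> 0).
  { intros E; apply Hm, (root_of_unity_pow_eq_1 N m HN).
    fold q; replace q with (q - 1 + 1)%C by ring; rewrite E; ring. }
  assert (HqN : (q ^ N)%C = 1).
  { unfold q; rewrite <- Cpow_mult_r, Nat.mul_comm, Cpow_mult_r, root_of_unity_pow_N by exact HN.
    clear; induction m as [|m IH]; simpl; [reflexivity | rewrite IH; ring]. }
  pose proof (Csum_geom q N) as G; rewrite HqN in G.
  replace (Csum _ N) with (Csum (fun j => q ^ j)%C N * (q - 1) * / (q - 1))%C by (field; exact Hq).
  rewrite G; ring.
Qed.

Lemma Csum_const c N : Csum (fun _ => c) N = (INR N * c)%C.
Proof. induction N as [|N IH]; simpl Csum; [simpl; ring|]. rewrite IH, S_INR, RtoC_plus. ring. Qed.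

Definition root_filter (N k n : nat) : C :=
  Csum (fun j => (root_of_unity N ^ (n + N - k)) ^ j)%C N.

Lemma root_filter_diag N k : (k < N)%nat -> root_filter N k k = INR N.
Proof.
  intros HkN. unfold root_filter. replace (k + N - k)%nat with N by lia.
  rewrite root_of_unity_pow_N by lia.
  rewrite (Csum_ext _ (fun _ => RtoC 1)), Csum_const by (intros; apply Cpow_1_l). ring.
Qed.

Lemma root_filter_off N k n : (k < N)%nat -> (n < N)%nat -> n <> k -> root_filter N k n = 0.
Proof.
  intros HkN HnN Hnk. apply sum_root_of_unity; [lia|].
  intros [q Hq]. destruct q as [|[|q]]; simpl in Hq; lia.
Qed.

Lemma Cmod_root_filter_le N k n : Cmod (root_filter N k n) <= INR N.
Proof.
  rewrite <- (Rmult_1_r (INR N)). apply Csum_Cmod_le; intros j.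
  rewrite Cmod_pow, Cmod_root_of_unity_pow, pow1; lra.
Qed.

(** A weighted average of [f] over the circle [|l| = rho] sampled at the [N]-th
    roots of unity keeps exactly the coefficients [a n] with [n = k (mod N)]:
    a discrete Cauchy formula. *)
Lemma pseries_root_of_unity_filter a f (rho : R) k N :
  has_pseries a f -> 0 < rho -> (k <= N)%nat ->
  is_Cseries (fun n => a n * rho ^ n * root_filter N k n)%C
    (Csum (fun j => root_of_unity N ^ (j * (N - k)) * f (rho * root_of_unity N ^ j))%C N).
Proof.
  intros H Hrho HkN.
  assert (Hl : forall j, (rho * root_of_unity N ^ j)%C <> 0).
  { intros j E. apply (f_equal Cmod) in E.
    rewrite Cmod_mult, Cmod_root_of_unity_pow, Cmod_R, Cmod_0, Rabs_pos_eq in E; lra. }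
  refine (is_Cseries_ext _ _ _ _
            (is_Cseries_Csum _ _ N (fun j => is_Cseries_scal _ _ _ (H _ (Hl j))))).
  intros n. unfold root_filter. rewrite <- Csum_scal. apply Csum_ext; intros j _.
  rewrite Cpow_mult_l, <- RtoC_pow, <- !Cpow_mult_r.
  replace ((n + N - k) * j)%nat with (j * (N - k) + j * n)%nat by nia.
  rewrite Cpow_add_r, Cpow_mult_r. ring.
Qed.

Lemma is_Cseries_isolated_term u s k N (c : nat -> R) :
  is_Cseries u s -> (k < N)%nat -> (forall n, (n < N)%nat -> n <> k -> u n = 0) ->
  (forall n, Cmod (u n) <= c n) -> ex_series c ->
  Cmod (s - u k) <= 2 * Series (fun j => c (N + j)%nat).
Proof.
  intros Hu HkN Hlow Hc Ec.
  assert (Hc0 : forall n, 0 <= c n) by (intros n; eapply Rle_trans; [apply Cmod_ge_0 | apply Hc]).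
  set (ctail := fun n => if Nat.leb N n then c n else 0).
  assert (Hrest : is_Cseries (fun n => u n + - (if Nat.eqb n k then u k else 0))%C (s - u k)%C).
  { apply is_Cseries_plus; [exact Hu|].
    replace (- u k)%C with (RtoC (-1) * u k)%C by ring.
    refine (is_Cseries_ext _ _ _ _ (is_Cseries_scal (-1) _ _ (is_Cseries_delta k (u k)))).
    intros n; destruct (Nat.eqb n k); ring. }
  assert (Ectail : ex_series ctail).
  { apply (ex_series_Rabs_le _ c); auto; intros n; unfold ctail.
    destruct (Nat.leb N n); [rewrite Rabs_pos_eq by auto; lra | rewrite Rabs_R0; auto]. }
  assert (Htail : Series ctail = Series (fun j => c (N + j)%nat)).
  { rewrite (Series_incr_n ctail N) by (auto; lia).
    rewrite sum_eq_R0, Rplus_0_l.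
    - apply Series_ext; intros j; unfold ctail.
      replace (Nat.leb N (N + j)) with true by (symmetry; apply Nat.leb_le; lia). reflexivity.
    - intros i Hi; unfold ctail.
      replace (Nat.leb N i) with false by (symmetry; apply Nat.leb_gt; lia). reflexivity. }
  rewrite <- Htail. apply (is_Cseries_Cmod_le _ _ _ Hrest); [|exact Ectail].
  intros n; unfold ctail.
  destruct (Nat.eqb_spec n k) as [Hnk|Hnk]; destruct (Nat.leb_spec N n) as [HNn|HNn].
  - lia.
  - rewrite Hnk, Cplus_opp_r, Cmod_0; lra.
  - rewrite Copp_0, Cplus_0_r; apply Hc.
  - rewrite Hlow, Copp_0, Cplus_0_r, Cmod_0 by auto; lra.
Qed.

Lemma pseries_coef_estimate a f (M rho : R) k N :
  has_pseries a f -> (forall l, l <> 0 -> Cmod (f l) <= M) -> (k < N)%nat -> 0 < rho ->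
  Cmod (a k) * rho ^ k <= M + 2 * Series (fun j => Cmod (a (N + j)%nat) * rho ^ (N + j)).
Proof.
  intros H HM HkN Hrho.
  set (u := fun n => (a n * rho ^ n * root_filter N k n)%C).
  set (s := Csum (fun j => root_of_unity N ^ (j * (N - k)) * f (rho * root_of_unity N ^ j))%C N).
  set (c := fun n => INR N * (Cmod (a n) * rho ^ n)).
  assert (Hpow : forall n, 0 <= rho ^ n) by (intros; apply pow_le; lra).
  assert (HNpos : 0 < INR N) by (apply lt_0_INR; lia).
  assert (Hu : is_Cseries u s) by (apply pseries_root_of_unity_filter; auto; lia).
  assert (Hc : forall n, Cmod (u n) <= c n).
  { intros n; unfold u, c. rewrite !Cmod_mult, Cmod_pow, Cmod_R, Rabs_pos_eq by lra.
    rewrite Rmult_comm. apply Rmult_le_compat_r; [|apply Cmod_root_filter_le].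
    apply Rmult_le_pos; [apply Cmod_ge_0 | auto]. }
  assert (Ec : ex_series c)
    by exact (ex_series_scal_l (K := R_AbsRing) (INR N) _ (has_pseries_abs a f H rho ltac:(lra))).
  assert (Hlow : forall n, (n < N)%nat -> n <> k -> u n = 0)
    by (intros n Hn Hnk; unfold u; rewrite root_filter_off by auto; ring).
  pose proof (is_Cseries_isolated_term u s k N c Hu HkN Hlow Hc Ec) as Hsk.
  unfold c in Hsk; rewrite Series_scal_l in Hsk.
  assert (Hs : Cmod s <= INR N * M).
  { apply Csum_Cmod_le; intros j.
    rewrite Cmod_mult, Cmod_root_of_unity_pow, Rmult_1_l. apply HM.
    intros E; apply (f_equal Cmod) in E.
    rewrite Cmod_mult, Cmod_root_of_unity_pow, Cmod_R, Cmod_0, Rabs_pos_eq in E; lra. }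
  assert (Huk : Cmod (u k) = INR N * (Cmod (a k) * rho ^ k)).
  { unfold u; rewrite root_filter_diag by exact HkN.
    rewrite !Cmod_mult, Cmod_pow, !Cmod_R, !Rabs_pos_eq by (auto; lra). ring. }
  assert (Htri : Cmod (u k) <= Cmod s + Cmod (s - u k)%C).
  { replace (u k) with (s - (s - u k))%C at 1 by ring.
    eapply Rle_trans; [apply Cmod_triangle | rewrite Cmod_opp; lra]. }
  rewrite Huk in Htri. apply (Rmult_le_reg_l (INR N)); nra.
Qed.

Lemma pseries_tail_lim (c : nat -> R) k : ex_series c ->
  is_lim_seq (fun m => Series (fun j => c (S (m + k) + j)%nat)) 0.
Proof.
  intros Ec.
  assert (Hsum : is_lim_seq (fun m => sum_n c (m + k)) (Series c)).
  { apply (is_lim_seq_incr_n (sum_n c) k), Series_correct, Ec. }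
  refine (is_lim_seq_ext _ _ _ _ _).
  2: { replace 0 with (Series c - Series c) by ring.
       exact (is_lim_seq_minus' _ _ _ _ (is_lim_seq_const _) Hsum). }
  intros m. rewrite (Series_incr_n c (S (m + k))), sum_n_Reals by (auto; lia). simpl. ring.
Qed.

Lemma pseries_bounded_coef_zero a f (M : R) :
  has_pseries a f -> (forall l, l <> 0 -> Cmod (f l) <= M) ->
  forall k, (1 <= k)%nat -> a k = 0.
Proof.
  intros H HM k Hk.
  assert (Hbound : forall rho, 0 < rho -> Cmod (a k) * rho ^ k <= M).
  { intros rho Hrho.
    set (c := fun n => Cmod (a n) * rho ^ n).
    assert (Hlim : is_lim_seq (fun m => M + 2 * Series (fun j => c (S (m + k) + j)%nat))
                              (M + 2 * 0)).
    { apply is_lim_seq_plus'; [apply is_lim_seq_const|].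
      apply is_lim_seq_mult'; [apply is_lim_seq_const|].
      apply pseries_tail_lim, (has_pseries_abs a f H); lra. }
    rewrite Rmult_0_r, Rplus_0_r in Hlim.
    refine (is_lim_seq_le (fun _ => Cmod (a k) * rho ^ k) _ _ _ _ (is_lim_seq_const _) Hlim).
    intros m; apply (pseries_coef_estimate a f M rho k); auto; lia. }
  apply Cmod_eq_0. destruct (Req_dec (Cmod (a k)) 0) as [|Hne]; auto; exfalso.
  pose proof (Cmod_ge_0 (a k)) as Hge.
  set (rho := M / Cmod (a k) + 1).
  assert (HM0 : 0 <= M) by (eapply Rle_trans; [|apply (HM 1), C1_nz]; apply Cmod_ge_0).
  assert (Hrho1 : 1 <= rho)
    by (unfold rho; pose proof (Rdiv_le_0_compat M (Cmod (a k)) HM0 ltac:(lra)); lra).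
  assert (Hrhok : rho <= rho ^ k).
  { destruct k as [|k]; [lia|]. simpl. pose proof (pow_R1_Rle rho k Hrho1). nra. }
  specialize (Hbound rho ltac:(lra)).
  assert (Cmod (a k) * rho = M + Cmod (a k)) by (unfold rho; field; lra).
  nra.
Qed.

Lemma entire_liouville f c d : entire f c -> entire (fun m => f (/ m)%C) d ->
  forall l, l <> 0 -> f l = c.
Proof.
  intros [a [Ha <-]] [b [Hb _]] l Hl.
  set (M := Rmax (2 * Series (fun n => Cmod (a n) * 1 ^ n))
                 (2 * Series (fun n => Cmod (b n) * 1 ^ n))).
  assert (HM : forall l, l <> 0 -> Cmod (f l) <= M).
  { intros z Hz. destruct (Rle_lt_dec (Cmod z) 1) as [Hz1|Hz1].
    - eapply Rle_trans; [apply (has_pseries_Cmod_le a f z 1 Ha Hz Hz1) | apply Rmax_l].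
    - rewrite <- (Cinv_inv z) by exact Hz.
      assert (Hinv : Cmod (/ z)%C <= 1).
      { rewrite Cmod_inv by exact Hz. rewrite <- Rinv_1. apply Rinv_le_contravar; lra. }
      eapply Rle_trans; [apply (has_pseries_Cmod_le b _ (/ z)%C 1 Hb (Cinv_neq_0 z Hz) Hinv)
                        | apply Rmax_r]. }
  apply (has_pseries_constant a f l Ha); auto.
  intros n; apply (pseries_bounded_coef_zero a f M Ha HM); lia.
Qed.

(** * Birkhoff factorizations *)

Definition M2adjugate (A : M2) : M2 := mkM2 (m22 A) (- m12 A) (- m21 A) (m11 A).

Local Ltac expand_M2 :=
  unfold M2inv, M2adjugate, M2scal, M2mul, M2id, M2det in *;
  cbn -[Cplus Cmult Cinv Copp Cminus RtoC] in *.

Lemma M2_eq (A B : M2) : (forall i j, ent A i j = ent B i j) -> A = B.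
Proof.
  destruct A, B; intros H.
  generalize (H false false) (H false true) (H true false) (H true true); simpl.
  intros -> -> -> ->; reflexivity.
Qed.

Lemma ent_M2mul A B i j : ent (M2mul A B) i j =
  (ent A i false * ent B false j + ent A i true * ent B true j)%C.
Proof. destruct i, j; reflexivity. Qed.

Lemma M2mul_assoc A B D : M2mul (M2mul A B) D = M2mul A (M2mul B D).
Proof. destruct A, B, D; unfold M2mul; simpl; f_equal; ring. Qed.

Lemma M2mul_1_l A : M2mul M2id A = A.
Proof. destruct A; unfold M2mul, M2id; simpl; f_equal; ring. Qed.

Lemma M2mul_1_r A : M2mul A M2id = A.
Proof. destruct A; unfold M2mul, M2id; simpl; f_equal; ring. Qed.

Lemma M2det_mul A B : M2det (M2mul A B) = (M2det A * M2det B)%C.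
Proof. destruct A, B; unfold M2det, M2mul; simpl; ring. Qed.

Lemma M2mul_inv_l A : M2det A <> 0 -> M2mul (M2inv A) A = M2id.
Proof. destruct A; expand_M2; intros H; f_equal; field; exact H. Qed.

Lemma M2mul_inv_r A : M2det A <> 0 -> M2mul A (M2inv A) = M2id.
Proof. destruct A; expand_M2; intros H; f_equal; field; exact H. Qed.

Lemma M2det_inv A : M2det A <> 0 -> M2det (M2inv A) = (/ M2det A)%C.
Proof. destruct A; expand_M2; intros H; field; exact H. Qed.

Lemma M2det_conj P X : M2det P <> 0 ->
  M2det (M2mul (M2mul (M2inv P) X) P) = M2det X.
Proof. intros H. rewrite !M2det_mul, M2det_inv by exact H. field; exact H. Qed.

Lemma M2inv_conj P X : M2det P <> 0 ->
  M2inv (M2mul (M2mul (M2inv P) X) P) = M2mul (M2mul (M2inv P) (M2inv X)) P.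
Proof.
  intros H. unfold M2inv at 1 4. rewrite M2det_conj by exact H.
  generalize (/ M2det X)%C; intros e.
  destruct P, X; expand_M2.
  f_equal; field; exact H.
Qed.

Lemma M2inv_det_1 A : M2det A = 1 -> M2inv A = M2adjugate A.
Proof.
  intros H. unfold M2inv; rewrite H.
  destruct A; expand_M2; f_equal; field.
Qed.

Definition M2entire (G : C -> M2) (c : M2) : Prop :=
  forall i j, entire (fun l => ent (G l) i j) (ent c i j).

Lemma M2entire_ext (G H : C -> M2) (c : M2) :
  M2entire G c -> (forall l, l <> 0 -> G l = H l) -> M2entire H c.
Proof. intros HG E i j. apply (entire_ext _ _ _ (HG i j)); intros l Hl; rewrite E; auto. Qed.

Lemma M2entire_const (c : M2) : M2entire (fun _ => c) c.
Proof. intros i j; apply entire_const. Qed.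

Lemma M2entire_mul (G H : C -> M2) (c d : M2) : M2entire G c -> M2entire H d ->
  M2entire (fun l => M2mul (G l) (H l)) (M2mul c d).
Proof.
  intros HG HH i j. rewrite ent_M2mul.
  refine (entire_ext _ _ _ (entire_plus _ _ _ _ (entire_mult _ _ _ _ (HG i false) (HH false j))
                                               (entire_mult _ _ _ _ (HG i true) (HH true j))) _).
  intros l _; rewrite ent_M2mul; reflexivity.
Qed.

Lemma M2entire_adjugate (G : C -> M2) (c : M2) :
  M2entire G c -> M2entire (fun l => M2adjugate (G l)) (M2adjugate c).
Proof.
  intros HG [|] [|]; simpl;
  [apply (HG false false) | apply entire_opp, (HG true false)
  | apply entire_opp, (HG false true) | apply (HG true true)].
Qed.

Lemma entire_M2det (G : C -> M2) (c : M2) : M2entire G c -> entire (fun l => M2det (G l)) (M2det c).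
Proof.
  intros HG. unfold M2det, Cminus.
  apply entire_plus; [|apply entire_opp]; apply entire_mult;
  [apply (HG false false) | apply (HG true true) | apply (HG false true) | apply (HG true false)].
Qed.

Lemma M2entire_det_1 (G : C -> M2) (c : M2) :
  M2entire G c -> (forall r, 0 < r -> M2det (G r) = 1) ->
  forall l, l <> 0 -> M2det (G l) = 1.
Proof. intros HG Hpos. exact (entire_eq_on_pos _ _ _ (entire_M2det G c HG) Hpos). Qed.

Lemma M2entire_inv (G : C -> M2) (c : M2) : M2entire G c -> (forall l, l <> 0 -> M2det (G l) = 1) ->
  M2entire (fun l => M2inv (G l)) (M2adjugate c).
Proof.
  intros HG Hdet. refine (M2entire_ext _ _ _ (M2entire_adjugate G c HG) _).
  intros l Hl; rewrite M2inv_det_1; auto.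
Qed.

Lemma M2entire_liouville (G : C -> M2) (c d : M2) :
  M2entire G c -> M2entire (fun m => G (/ m)%C) d -> forall l, l <> 0 -> G l = c.
Proof.
  intros HG HGinf l Hl. apply M2_eq; intros i j.
  exact (entire_liouville _ _ _ (HG i j) (HGinf i j) l Hl).
Qed.

Lemma birkhoff_unique (U1 V1 U2 V2 : C -> M2) (c1 c2 : M2) :
  M2entire U1 M2id -> M2entire U2 M2id ->
  M2entire (fun m => V1 (/ m)%C) c1 -> M2entire (fun m => V2 (/ m)%C) c2 ->
  (forall l, l <> 0 -> M2det (U1 l) = 1) -> (forall l, l <> 0 -> M2det (V2 l) = 1) ->
  (forall l, l <> 0 -> M2mul (U1 l) (V1 l) = M2mul (U2 l) (V2 l)) ->
  forall l, l <> 0 -> U1 l = U2 l.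
Proof.
  intros HU1 HU2 HV1 HV2 dU1 dV2 E.
  assert (Hne : forall A, M2det A = 1 -> M2det A <> 0) by (intros A ->; exact C1_nz).
  (* [X] is given by a power series both in [l] and in [/ l], hence constant. *)
  set (X := fun l => M2mul (M2inv (U1 l)) (U2 l)).
  assert (HX : forall l, l <> 0 -> X l = M2mul (V1 l) (M2inv (V2 l))).
  { intros l Hl. unfold X.
    rewrite <- (M2mul_1_r (M2mul (M2inv (U1 l)) (U2 l))), <- (M2mul_inv_r (V2 l)) by auto.
    rewrite !M2mul_assoc, <- (M2mul_assoc (U2 l)), <- E by exact Hl.
    rewrite <- !M2mul_assoc, M2mul_inv_l, M2mul_1_l by auto. reflexivity. }
  assert (HXent : M2entire X (M2mul (M2adjugate M2id) M2id)).
  { apply M2entire_mul; [apply M2entire_inv|]; auto. }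
  assert (HXinf : M2entire (fun m => X (/ m)%C) (M2mul c1 (M2adjugate c2))).
  { refine (M2entire_ext _ _ _ (M2entire_mul _ _ _ _ HV1
              (M2entire_inv _ _ HV2 (fun m Hm => dV2 _ (Cinv_neq_0 m Hm)))) _).
    intros m Hm; rewrite HX by (apply Cinv_neq_0, Hm); reflexivity. }
  intros l Hl.
  assert (HXl : X l = M2id).
  { rewrite (M2entire_liouville X _ _ HXent HXinf l Hl).
    unfold M2adjugate, M2id, M2mul; simpl; f_equal; ring. }
  unfold X in HXl.
  rewrite <- (M2mul_1_l (U2 l)), <- (M2mul_inv_r (U1 l)), M2mul_assoc, HXl, M2mul_1_r by auto.
  reflexivity.
Qed.

Lemma Czpow_of_nat l n : Czpow l (Z.of_nat n) = (l ^ n)%C.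
Proof. destruct n as [|n]; [reflexivity|]. simpl; rewrite SuccNat2Pos.id_succ; reflexivity. Qed.

Lemma Czpow_neg l n : l <> 0 -> Czpow l (- Z.of_nat (S n)) = ((/ l) ^ S n)%C.
Proof.
  intros Hl. change (- Z.of_nat (S n))%Z with (Zneg (Pos.of_succ_nat n)); unfold Czpow.
  rewrite SuccNat2Pos.id_succ, Cpow_inv by exact Hl. reflexivity.
Qed.

Lemma ent_M2zero i j : ent M2zero i j = 0.
Proof. destruct i, j; reflexivity. Qed.

Lemma laurent_plus_entire (a : Z -> M2) (g : C -> M2) :
  laurent_coeffs a g -> (forall k, (k < 0)%Z -> a k = M2zero) -> M2entire g (a 0%Z).
Proof.
  intros HL Hneg i j. exists (fun n => ent (a (Z.of_nat n)) i j); split; [|reflexivity].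
  intros l Hl. destruct (HL l Hl i j) as [Pp [Pn [Hp [Hn ->]]]].
  apply is_Cseries_of_is_series in Hp, Hn.
  replace Pn with (RtoC 0) in *.
  - rewrite Cplus_0_r. refine (is_Cseries_ext _ _ _ _ Hp).
    intros n; rewrite Czpow_of_nat; reflexivity.
  - refine (is_Cseries_unique _ _ _ (is_Cseries_ext _ _ _ _ is_Cseries_0) Hn).
    intros n; rewrite Hneg, ent_M2zero by lia; ring.
Qed.

Lemma laurent_minus_entire (a : Z -> M2) (g : C -> M2) :
  laurent_coeffs a g -> (forall k, (0 < k)%Z -> a k = M2zero) ->
  M2entire (fun m => g (/ m)%C) (a 0%Z).
Proof.
  intros HL Hpos i j. exists (fun n => ent (a (- Z.of_nat n)%Z) i j); split; [|reflexivity].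
  intros m Hm. destruct (HL _ (Cinv_neq_0 m Hm) i j) as [Pp [Pn [Hp [Hn ->]]]].
  apply is_Cseries_of_is_series in Hp, Hn.
  replace Pp with (ent (a 0%Z) i j).
  - replace (ent (a 0%Z) i j) with (ent (a (- Z.of_nat 0)%Z) i j * m ^ 0)%C by (simpl; ring).
    apply (is_Cseries_shift (fun n => ent (a (- Z.of_nat n)%Z) i j * m ^ n)%C).
    refine (is_Cseries_ext _ _ _ _ Hn); intros n.
    rewrite Czpow_neg, Cinv_inv by (auto using Cinv_neq_0). reflexivity.
  - refine (is_Cseries_unique _ _ _ (is_Cseries_ext _ _ _ _ (is_Cseries_delta 0 _)) Hp).
    intros [|n]; simpl; [ring|]. rewrite Hpos, ent_M2zero by lia; ring.
Qed.

Lemma SU2_on_reals_det (g : C -> M2) (r : R) : SU2_on_reals g -> 0 < r -> M2det (g r) = 1.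
Proof. intros H Hr. apply (H r); lra. Qed.

Lemma M2entire_inv_det_1 (g : C -> M2) (c : M2) :
  M2entire (fun m => g (/ m)%C) c -> SU2_on_reals g -> forall l, l <> 0 -> M2det (g l) = 1.
Proof.
  intros Hg HSU l Hl. rewrite <- (Cinv_inv l) by exact Hl.
  apply (M2entire_det_1 _ _ Hg); [|apply Cinv_neq_0, Hl].
  intros r Hr. rewrite <- RtoC_inv by lra. apply SU2_on_reals_det; auto. apply Rinv_0_lt_compat, Hr.
Qed.

Lemma LplusStarSU2_entire (g : C -> M2) : LplusStarSU2 g ->
  M2entire g M2id /\ forall l, l <> 0 -> M2det (g l) = 1.
Proof.
  intros [a [HL [[Hneg Ha0] [HSU _]]]].
  pose proof (laurent_plus_entire a g HL Hneg) as Hg; rewrite Ha0 in Hg.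
  split; [exact Hg | apply (M2entire_det_1 _ _ Hg); intros; apply SU2_on_reals_det; auto].
Qed.

Lemma LplusSU2_entire (g : C -> M2) : LplusSU2 g ->
  (exists c : M2, M2entire g c) /\ forall l, l <> 0 -> M2det (g l) = 1.
Proof.
  intros [a [HL [Hneg [HSU _]]]].
  pose proof (laurent_plus_entire a g HL Hneg) as Hg.
  split; [exists (a 0%Z); exact Hg|].
  apply (M2entire_det_1 _ _ Hg); intros; apply SU2_on_reals_det; auto.
Qed.

Lemma LminusStarSU2_entire (g : C -> M2) : LminusStarSU2 g ->
  M2entire (fun m => g (/ m)%C) M2id /\ forall l, l <> 0 -> M2det (g l) = 1.
Proof.
  intros [a [HL [[Hpos Ha0] [HSU _]]]].
  pose proof (laurent_minus_entire a g HL Hpos) as Hg; rewrite Ha0 in Hg.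
  split; [exact Hg | exact (M2entire_inv_det_1 g _ Hg HSU)].
Qed.

Lemma LminusSU2_entire (g : C -> M2) : LminusSU2 g ->
  (exists c : M2, M2entire (fun m => g (/ m)%C) c) /\ forall l, l <> 0 -> M2det (g l) = 1.
Proof.
  intros [a [HL [Hpos [HSU _]]]].
  pose proof (laurent_minus_entire a g HL Hpos) as Hg.
  split; [exists (a 0%Z); exact Hg | exact (M2entire_inv_det_1 g _ Hg HSU)].
Qed.

Lemma birkhoff_unique_reflected (U1 V1 U2 V2 : C -> M2) (c1 c2 : M2) :
  M2entire (fun m => U1 (/ m)%C) M2id -> M2entire (fun m => U2 (/ m)%C) M2id ->
  M2entire V1 c1 -> M2entire V2 c2 ->
  (forall l, l <> 0 -> M2det (U1 l) = 1) -> (forall l, l <> 0 -> M2det (V2 l) = 1) ->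
  (forall l, l <> 0 -> M2mul (U1 l) (V1 l) = M2mul (U2 l) (V2 l)) ->
  forall l, l <> 0 -> U1 l = U2 l.
Proof.
  intros HU1 HU2 HV1 HV2 dU1 dV2 E l Hl.
  assert (Hinvinv : forall V : C -> M2, forall l, l <> 0 -> V l = V (/ / l)%C)
    by (intros V z Hz; rewrite Cinv_inv by exact Hz; reflexivity).
  rewrite <- (Cinv_inv l) by exact Hl.
  apply (birkhoff_unique (fun m => U1 (/ m)%C) (fun m => V1 (/ m)%C)
                         (fun m => U2 (/ m)%C) (fun m => V2 (/ m)%C) c1 c2);
    auto using Cinv_neq_0.
  - exact (M2entire_ext _ _ _ HV1 (Hinvinv V1)).
  - exact (M2entire_ext _ _ _ HV2 (Hinvinv V2)).
Qed.

Lemma M2entire_conj (G : C -> M2) (c P Q : M2) : M2entire G c ->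
  M2entire (fun l => M2mul (M2mul P (G l)) Q) (M2mul (M2mul P c) Q).
Proof. intros HG. apply M2entire_mul; [apply M2entire_mul|]; auto using M2entire_const. Qed.

Lemma M2entire_conj_1 (G : C -> M2) (P : M2) : M2det P <> 0 -> M2entire G M2id ->
  M2entire (fun l => M2mul (M2mul (M2inv P) (G l)) P) M2id.
Proof.
  intros HP HG. pose proof (M2entire_conj G M2id (M2inv P) P HG) as H.
  rewrite M2mul_1_r, M2mul_inv_l in H by exact HP. exact H.
Qed.

Lemma M2mul_conj_split (P Q X Y : M2) : M2det P <> 0 ->
  M2mul (M2mul (M2inv P) (M2mul X Y)) Q =
  M2mul (M2mul (M2mul (M2inv P) X) P) (M2mul (M2mul (M2inv P) Y) Q).
Proof.
  intros HP. rewrite !M2mul_assoc, <- (M2mul_assoc P), M2mul_inv_r, M2mul_1_l by exact HP.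
  reflexivity.
Qed.

Lemma birkhoff_plus_conj (P Q : M2) (Up Vm Uhp Vhm : C -> M2) :
  M2det P <> 0 ->
  LplusStarSU2 Up -> LminusSU2 Vm -> LplusStarSU2 Uhp -> LminusSU2 Vhm ->
  (forall l, l <> 0 ->
     M2mul (M2mul (M2inv P) (M2mul (Up l) (Vm l))) Q = M2mul (Uhp l) (Vhm l)) ->
  forall l, l <> 0 -> Uhp l = M2mul (M2mul (M2inv P) (Up l)) P.
Proof.
  intros HP HUp HVm HUhp HVhm E l Hl.
  destruct (LplusStarSU2_entire Up HUp) as [EUp dUp].
  destruct (LplusStarSU2_entire Uhp HUhp) as [EUhp _].
  destruct (LminusSU2_entire Vm HVm) as [[c EVm] _].
  destruct (LminusSU2_entire Vhm HVhm) as [[ch EVhm] dVhm].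
  symmetry; revert l Hl.
  apply (birkhoff_unique _ (fun l => M2mul (M2mul (M2inv P) (Vm l)) Q) _ Vhm
           (M2mul (M2mul (M2inv P) c) Q) ch); auto using M2entire_conj_1.
  - exact (M2entire_conj _ _ _ _ EVm).
  - intros l Hl; rewrite M2det_conj by exact HP; auto.
  - intros l Hl; rewrite <- M2mul_conj_split by exact HP; auto.
Qed.

Lemma birkhoff_minus_conj (P Q : M2) (Um Vp Uhm Vhp : C -> M2) :
  M2det P <> 0 ->
  LminusStarSU2 Um -> LplusSU2 Vp -> LminusStarSU2 Uhm -> LplusSU2 Vhp ->
  (forall l, l <> 0 ->
     M2mul (M2mul (M2inv P) (M2mul (Um l) (Vp l))) Q = M2mul (Uhm l) (Vhp l)) ->
  forall l, l <> 0 -> Uhm l = M2mul (M2mul (M2inv P) (Um l)) P.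
Proof.
  intros HP HUm HVp HUhm HVhp E l Hl.
  destruct (LminusStarSU2_entire Um HUm) as [EUm dUm].
  destruct (LminusStarSU2_entire Uhm HUhm) as [EUhm _].
  destruct (LplusSU2_entire Vp HVp) as [[c EVp] _].
  destruct (LplusSU2_entire Vhp HVhp) as [[ch EVhp] dVhp].
  symmetry; revert l Hl.
  apply (birkhoff_unique_reflected _ (fun l => M2mul (M2mul (M2inv P) (Vp l)) Q) _ Vhp
           (M2mul (M2mul (M2inv P) c) Q) ch); auto.
  - exact (M2entire_conj_1 (fun m => Um (/ m)%C) P HP EUm).
  - exact (M2entire_conj _ _ _ _ EVp).
  - intros l Hl; rewrite M2det_conj by exact HP; auto.
  - intros l Hl; rewrite <- M2mul_conj_split by exact HP; auto.
Qed.

(** * Partial derivatives and potentials *)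

Definition is_Cderive (u : R -> C) (z : R) (d : C) : Prop :=
  is_derive (fun t => fst (u t)) z (fst d) /\ is_derive (fun t => snd (u t)) z (snd d).

Lemma is_Cderive_ext u v z d : (forall t, u t = v t) -> is_Cderive u z d -> is_Cderive v z d.
Proof.
  intros E [H1 H2]; split;
  [refine (is_derive_ext _ _ _ _ _ H1) | refine (is_derive_ext _ _ _ _ _ H2)];
  intros t; rewrite E; reflexivity.
Qed.

Lemma is_Cderive_plus u v z d e : is_Cderive u z d -> is_Cderive v z e ->
  is_Cderive (fun t => u t + v t)%C z (d + e)%C.
Proof.
  intros [H1 H2] [H3 H4];
  split; [exact (is_derive_plus _ _ _ _ _ H1 H3) | exact (is_derive_plus _ _ _ _ _ H2 H4)].
Qed.

Lemma is_Cderive_scal_l c u z d : is_Cderive u z d -> is_Cderive (fun t => c * u t)%C z (c * d)%C.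
Proof.
  intros [H1 H2]; split.
  - exact (is_derive_minus _ _ _ _ _ (is_derive_scal _ _ (fst c) _ H1)
                                      (is_derive_scal _ _ (snd c) _ H2)).
  - exact (is_derive_plus _ _ _ _ _ (is_derive_scal _ _ (fst c) _ H2)
                                     (is_derive_scal _ _ (snd c) _ H1)).
Qed.

Lemma is_Cderive_scal_r c u z d : is_Cderive u z d -> is_Cderive (fun t => u t * c)%C z (d * c)%C.
Proof.
  intros H. rewrite Cmult_comm.
  refine (is_Cderive_ext _ _ _ _ _ (is_Cderive_scal_l c u z d H)); intros t; apply Cmult_comm.
Qed.

Definition has_M2derive (h : R -> M2) (z : R) (L : M2) : Prop :=
  forall i j, is_Cderive (fun t => ent (h t) i j) z (ent L i j).

Definition M2Derive (h : R -> M2) (z : R) : M2 :=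
  let d i j : C := (Derive (fun t => fst (ent (h t) i j)) z,
                    Derive (fun t => snd (ent (h t) i j)) z) in
  mkM2 (d false false) (d false true) (d true false) (d true true).

Lemma M2Derive_unique h z L : has_M2derive h z L -> M2Derive h z = L.
Proof.
  intros H. apply M2_eq; intros i j. destruct (H i j) as [H1 H2].
  apply is_derive_unique in H1, H2.
  destruct i, j; apply C_eq; simpl; assumption.
Qed.

Lemma has_M2derive_mul_l (P : M2) h z L : has_M2derive h z L ->
  has_M2derive (fun t => M2mul P (h t)) z (M2mul P L).
Proof.
  intros H i j. rewrite ent_M2mul.
  refine (is_Cderive_ext
            (fun t => ent P i false * ent (h t) false j + ent P i true * ent (h t) true j)%C
            _ _ _ (fun t => eq_sym (ent_M2mul _ _ _ _)) _).
  apply is_Cderive_plus; apply is_Cderive_scal_l, H.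
Qed.

Lemma has_M2derive_mul_r (Q : M2) h z L : has_M2derive h z L ->
  has_M2derive (fun t => M2mul (h t) Q) z (M2mul L Q).
Proof.
  intros H i j. rewrite ent_M2mul.
  refine (is_Cderive_ext
            (fun t => ent (h t) i false * ent Q false j + ent (h t) i true * ent Q true j)%C
            _ _ _ (fun t => eq_sym (ent_M2mul _ _ _ _)) _).
  apply is_Cderive_plus; apply is_Cderive_scal_r, H.
Qed.

Lemma has_M2derive_ext_loc (h g : R -> M2) z L : has_M2derive h z L ->
  (exists e, 0 < e /\ forall t, Rabs (t - z) < e -> h t = g t) -> has_M2derive g z L.
Proof.
  intros H [e [He E]] i j. destruct (H i j) as [H1 H2].
  assert (Hloc : locally z (fun t => h t = g t)) by (exists (mkposreal e He); exact E).
  split; (eapply is_derive_ext_loc; [|eassumption]);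
  eapply filter_imp; try exact Hloc; intros t Et; simpl; rewrite Et; reflexivity.
Qed.

Lemma M2smooth_has_M2derive (O : R -> R -> Prop) (G : R -> R -> M2) x y :
  M2smooth_on O G -> O x y ->
  has_M2derive (fun t => G t y) x (M2pdx G x y) /\ has_M2derive (fun t => G x t) y (M2pdy G x y).
Proof.
  intros HG HO.
  assert (Hex : forall f : R -> R -> R, smooth_on O f ->
            ex_derive (fun t => f t y) x /\ ex_derive (fun t => f x t) y).
  { intros f [F [HF0 HF]]. destruct (HF nil x y HO) as [Hx [Hy _]]. rewrite HF0 in Hx, Hy.
    split; eexists; eassumption. }
  split; intros i j; destruct (HG i j) as [Sfst Ssnd];
  destruct (Hex _ Sfst) as [Ex1 Ey1]; destruct (Hex _ Ssnd) as [Ex2 Ey2];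
  apply Derive_correct in Ex1, Ey1, Ex2, Ey2; split; destruct i, j; assumption.
Qed.

Lemma open2_lines (O : R -> R -> Prop) x y : open2 O -> O x y ->
  exists e, 0 < e /\ (forall t, Rabs (t - x) < e -> O t y) /\ (forall t, Rabs (t - y) < e -> O x t).
Proof.
  intros HO Hxy. destruct (HO x y Hxy) as [e [He HE]].
  exists e; split; [exact He|]; split; intros t Ht; apply HE; auto;
  rewrite Rminus_diag, Rabs_R0; exact He.
Qed.

Section ConjugatedPartials.

Variables (O : R -> R -> Prop) (P Q : M2) (F G : R -> R -> M2) (x y : R).
Hypotheses (HO : open2 O) (Hxy : O x y) (HG : M2smooth_on O G)
  (HFG : forall s t, O s t -> F s t = M2mul (M2mul P (G s t)) Q).

Lemma M2pdx_conj : M2pdx F x y = M2mul (M2mul P (M2pdx G x y)) Q.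
Proof.
  apply (M2Derive_unique (fun t => F t y)).
  destruct (open2_lines O x y HO Hxy) as [e [He [Hline _]]].
  apply (has_M2derive_ext_loc (fun t => M2mul (M2mul P (G t y)) Q)).
  - apply has_M2derive_mul_r, has_M2derive_mul_l, (M2smooth_has_M2derive O G x y HG Hxy).
  - exists e; split; [exact He | intros t Ht; symmetry; apply HFG, Hline, Ht].
Qed.

Lemma M2pdy_conj : M2pdy F x y = M2mul (M2mul P (M2pdy G x y)) Q.
Proof.
  apply (M2Derive_unique (fun t => F x t)).
  destruct (open2_lines O x y HO Hxy) as [e [He [_ Hline]]].
  apply (has_M2derive_ext_loc (fun t => M2mul (M2mul P (G x t)) Q)).
  - apply has_M2derive_mul_r, has_M2derive_mul_l, (M2smooth_has_M2derive O G x y HG Hxy).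
  - exists e; split; [exact He | intros t Ht; symmetry; apply HFG, Hline, Ht].
Qed.

End ConjugatedPartials.

Lemma M2scal_conj c (P Y Q : M2) :
  M2scal c (M2mul (M2mul P Y) Q) = M2mul (M2mul P (M2scal c Y)) Q.
Proof. destruct P, Y, Q; unfold M2scal, M2mul; simpl; f_equal; ring. Qed.

Lemma potential_conj c (P X D : M2) : M2det P <> 0 ->
  M2scal c (M2mul (M2inv (M2mul (M2mul (M2inv P) X) P)) (M2mul (M2mul (M2inv P) D) P)) =
  M2mul (M2mul (M2inv P) (M2scal c (M2mul (M2inv X) D))) P.
Proof.
  intros HP. rewrite M2inv_conj, <- M2scal_conj by exact HP. f_equal.
  rewrite !M2mul_assoc, <- (M2mul_assoc P), M2mul_inv_r, M2mul_1_l by exact HP. reflexivity.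
Qed.

Section ConjugatedPotentials.

Variables (O : R -> R -> Prop) (P : M2) (G H : R -> R -> C -> M2) (x y : R) (l : C).
Hypotheses (HO : open2 O) (Hxy : O x y) (HP : M2det P <> 0)
  (HG : M2smooth_on O (fun s t => G s t l))
  (HGH : forall s t, O s t -> H s t l = M2mul (M2mul (M2inv P) (G s t l)) P).

Lemma eta_x_conj : eta_x H x y l = M2mul (M2mul (M2inv P) (eta_x G x y l)) P.
Proof.
  unfold eta_x. rewrite HGH by exact Hxy.
  rewrite (M2pdx_conj O (M2inv P) P _ _ x y HO Hxy HG HGH). apply potential_conj, HP.
Qed.

Lemma eta_y_conj : eta_y H x y l = M2mul (M2mul (M2inv P) (eta_y G x y l)) P.
Proof.
  unfold eta_y. rewrite HGH by exact Hxy.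
  rewrite (M2pdy_conj O (M2inv P) P _ _ x y HO Hxy HG HGH). apply potential_conj, HP.
Qed.

End ConjugatedPotentials.

Lemma Rot_det t : M2det (Rot t) = 1.
Proof.
  unfold M2det, Rot; simpl. rewrite cexpi_add, Rplus_opp_r.
  unfold cexpi; rewrite cos_0, sin_0; apply C_eq; simpl; ring.
Qed.

Theorem proposition3
  (x0 y0 : R) (hx0 : 0 < x0) (hy0 : 0 < y0)
  (phi : R -> R -> R) (Hphi : smooth_on_D x0 y0 phi)
  (HSG : forall x y, inD x0 y0 x y -> pdy (pdx phi) x y = sin (phi x y))
  (U : R -> R -> C -> M2) (HU : is_frame x0 y0 phi U)
  (theta : R -> R -> R) (Htheta : smooth_on_D x0 y0 theta)
  (Omega : R -> R -> Prop) (HOopen : open2 Omega)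
  (HOD : forall x y, Omega x y -> inD x0 y0 x y)
  (Up Vm Um Vp Uhp Vhm Uhm Vhp : R -> R -> C -> M2)
  (HUp : forall x y, Omega x y -> LplusStarSU2 (Up x y))
  (HVm : forall x y, Omega x y -> LminusSU2 (Vm x y))
  (HUm : forall x y, Omega x y -> LminusStarSU2 (Um x y))
  (HVp : forall x y, Omega x y -> LplusSU2 (Vp x y))
  (HUhp : forall x y, Omega x y -> LplusStarSU2 (Uhp x y))
  (HVhm : forall x y, Omega x y -> LminusSU2 (Vhm x y))
  (HUhm : forall x y, Omega x y -> LminusStarSU2 (Uhm x y))
  (HVhp : forall x y, Omega x y -> LplusSU2 (Vhp x y))
  (Hsmooth : forall l : C, l <> RtoC 0 ->
     M2smooth_on Omega (fun x y => Up x y l) /\ M2smooth_on Omega (fun x y => Vm x y l) /\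
     M2smooth_on Omega (fun x y => Um x y l) /\ M2smooth_on Omega (fun x y => Vp x y l) /\
     M2smooth_on Omega (fun x y => Uhp x y l) /\ M2smooth_on Omega (fun x y => Vhm x y l) /\
     M2smooth_on Omega (fun x y => Uhm x y l) /\ M2smooth_on Omega (fun x y => Vhp x y l))
  (Hfact : forall x y, Omega x y -> forall l : C, l <> RtoC 0 ->
     U x y l = M2mul (Up x y l) (Vm x y l) /\
     U x y l = M2mul (Um x y l) (Vp x y l))
  (Hfacth : forall x y, Omega x y -> forall l : C, l <> RtoC 0 ->
     M2mul (M2mul (M2inv (Rot (theta 0 0))) (U x y l)) (Rot (theta x y))
       = M2mul (Uhp x y l) (Vhm x y l) /\
     M2mul (M2mul (M2inv (Rot (theta 0 0))) (U x y l)) (Rot (theta x y))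
       = M2mul (Uhm x y l) (Vhp x y l)) :
  forall x y, Omega x y -> forall l : C, l <> RtoC 0 ->
    eta_x Uhp x y l = M2mul (M2mul (M2inv (Rot (theta 0 0))) (eta_x Up x y l)) (Rot (theta 0 0)) /\
    eta_y Uhm x y l = M2mul (M2mul (M2inv (Rot (theta 0 0))) (eta_y Um x y l)) (Rot (theta 0 0)).
Proof.
  intros x y Hxy l Hl.
  set (R0 := Rot (theta 0 0)).
  assert (HR0 : M2det R0 <> 0) by (unfold R0; rewrite Rot_det; exact C1_nz).
  assert (Hplus : forall s t, Omega s t -> Uhp s t l = M2mul (M2mul (M2inv R0) (Up s t l)) R0).
  { intros s t Hst.
    apply (birkhoff_plus_conj R0 (Rot (theta s t)) (Up s t) (Vm s t) _ (Vhm s t)); auto.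
    intros m Hm. rewrite <- (proj1 (Hfact s t Hst m Hm)). apply (Hfacth s t Hst m Hm). }
  assert (Hminus : forall s t, Omega s t -> Uhm s t l = M2mul (M2mul (M2inv R0) (Um s t l)) R0).
  { intros s t Hst.
    apply (birkhoff_minus_conj R0 (Rot (theta s t)) (Um s t) (Vp s t) _ (Vhp s t)); auto.
    intros m Hm. rewrite <- (proj2 (Hfact s t Hst m Hm)). apply (Hfacth s t Hst m Hm). }
  destruct (Hsmooth l Hl) as [SUp [_ [SUm _]]].
  split; [apply (eta_x_conj Omega) | apply (eta_y_conj Omega)]; auto.
Qed.
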